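(* Let $\alpha\in(0,1)$, let $N\ge1$ and $M>1+\frac{N}{\alpha}$ be integers, and let $\{\mathcal U_1,\dots,\mathcal U_M\}$ be a $(\Gamma,\Delta)$ set system over $[N]$. Then $$\frac{\Delta}{\Gamma}\ge(1-\alpha)\,h_2^{-1}\!\left(\frac{\log_2 M}{N}\right).$$
   Context: For integers $N,M\ge1$ and $\Delta<\Gamma<N$, a $(\Gamma,\Delta)$ set system over $[N]=\{1,\dots,N\}$ is a collection $\{\mathcal U_1,\dots,\mathcal U_M\}$ of $M$ distinct subsets of $[N]$, each of size $\Gamma$, with $\Delta=\max_{i\ne j}|\mathcal U_i\cap\mathcal U_j|$. $h_2(p)=-p\log_2p-(1-p)\log_2(1-p)$ is the binary entropy function and $h_2^{-1}:[0,1]\to[0,1/2]$ is the inverse of its restriction to $[0,1/2]$. *)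

From Stdlib Require Import Reals ClassicalEpsilon.
From mathcomp Require Import all_boot.

Set Implicit Arguments.
Unset Strict Implicit.
Unset Printing Implicit Defensive.

Open Scope R_scope.

Definition log2 (x : R) : R := ln x / ln 2.

Definition xlog2x (p : R) : R := if Req_EM_T p 0 then 0 else p * log2 p.

Definition h2 (p : R) : R := - xlog2x p - xlog2x (1 - p).

(* inverse of the restriction of h2 to [0,1/2]: the (unique) p in [0,1/2]
   with h2 p = y (meaningful for y in [0,1]) *)
Definition h2inv (y : R) : R :=
  epsilon (inhabits 0) (fun p => 0 <= p <= 1/2 /\ h2 p = y).

Close Scope R_scope.

Definition set_system (N M Gamma Delta : nat) (U : 'I_M -> {set 'I_N}) : Prop :=
  injective U /\
  (forall i, #|U i| = Gamma) /\
  Delta = \max_(ij : 'I_M * 'I_M | ij.1 != ij.2) #|U ij.1 :&: U ij.2|.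

(* Cauchy-Schwarz on the degrees of the points of [N] gives the Johnson-type
   bound M Gamma^2 <= N (Gamma + (M - 1) Delta), which together with
   M > 1 + N / alpha yields N Delta >= (1 - alpha) Gamma^2.  On the other hand
   M <= C(N, Gamma) and C(N, Gamma) p^Gamma (1 - p)^(N - Gamma) <= 1 for every
   p in (0, 1); for p = h2^-1 (log2 M / N) < 1/2 this gives Gamma >= p N.
   Hence Delta / Gamma >= (1 - alpha) Gamma / N >= (1 - alpha) p. *)

From Stdlib Require Import Reals Lra Lia ClassicalEpsilon.
From mathcomp Require Import all_boot zify.

Set Implicit Arguments.
Unset Strict Implicit.

Lemma sqr_sum_le_card_sum_sqr (T : finType) (f : T -> nat) :
  (\sum_x f x) ^ 2 <= #|T| * \sum_x f x ^ 2.
Proof.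
have sqr_sumE : (\sum_x f x) ^ 2 = \sum_x \sum_y f x * f y.
  by rewrite expnS expn1 big_distrlr.
have sum_pairsE : \sum_x \sum_y (f x ^ 2 + f y ^ 2) = 2 * (#|T| * \sum_x f x ^ 2).
  rewrite (eq_bigr (fun x => #|T| * f x ^ 2 + \sum_y f y ^ 2)); last first.
    by move=> x _; rewrite big_split /= sum_nat_const.
  by rewrite big_split /= sum_nat_const -big_distrr mul2n -addnn.
have : 2 * \sum_x \sum_y f x * f y <= \sum_x \sum_y (f x ^ 2 + f y ^ 2).
  rewrite big_distrr; apply: leq_sum => x _; rewrite big_distrr.
  by apply: leq_sum => y _; rewrite (nat_Cauchy (f x) (f y)).
rewrite sqr_sumE sum_pairsE; lia.
Qed.

Section Degree.

Context {T I : finType} (U : I -> {set T}).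

Definition degree (x : T) : nat := \sum_i (x \in U i : nat).

Lemma sum_indicator (A : {set T}) : \sum_x (x \in A : nat) = #|A|.
Proof. by rewrite -sum1_card [RHS]big_mkcond; apply: eq_bigr => x _; case: (x \in A). Qed.

Lemma sum_degree : \sum_x degree x = \sum_i #|U i|.
Proof. by rewrite exchange_big; apply: eq_bigr => i _; rewrite sum_indicator. Qed.

Lemma sum_degree_sqr : \sum_x degree x ^ 2 = \sum_i \sum_j #|U i :&: U j|.
Proof.
rewrite (eq_bigr (fun x => \sum_i \sum_j ((x \in U i) * (x \in U j)))); last first.
  by move=> x _; rewrite expnS expn1 /degree big_distrlr.
rewrite exchange_big; apply: eq_bigr => i _.
rewrite exchange_big; apply: eq_bigr => j _.
rewrite -sum_indicator; apply: eq_bigr => x _; rewrite inE.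
by case: (x \in U i); case: (x \in U j).
Qed.

End Degree.

Section SetSystem.

Context {N M Gamma Delta : nat} {U : 'I_M -> {set 'I_N}}.
Hypothesis sysU : set_system Gamma Delta U.

Lemma set_system_sum_cap :
  \sum_i \sum_j #|U i :&: U j| <= M * (Gamma + (M - 1) * Delta).
Proof.
case: sysU => _ [cardU ->].
rewrite -[M in M * _]card_ord -sum_nat_const; apply: leq_sum => i _.
rewrite (bigD1 i) //= setIid cardU leq_add2l.
have -> : M - 1 = #|[pred j | j != i]| by rewrite cardC1 card_ord; lia.
rewrite -sum_nat_const; apply: leq_sum => j ji.
by apply: (leq_bigmax_cond (F := fun ij : 'I_M * 'I_M => #|U ij.1 :&: U ij.2|) (i, j)); rewrite /= eq_sym.
Qed.

Lemma set_system_johnson : M * Gamma ^ 2 <= N * (Gamma + (M - 1) * Delta).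
Proof.
have [->|M_gt0] := posnP M; first by rewrite mul0n.
have := sqr_sum_le_card_sum_sqr (degree U).
rewrite sum_degree sum_degree_sqr card_ord.
have -> : \sum_i #|U i| = M * Gamma.
  case: sysU => _ [cardU _].
  by rewrite (eq_bigr (fun _ => Gamma)) ?sum_nat_const ?card_ord.
move=> /leq_trans /(_ (leq_mul (leqnn N) set_system_sum_cap)).
by rewrite expnMn -mulnA mulnCA leq_pmul2l.
Qed.

Lemma set_system_card_le_binomial : M <= 'C(N, Gamma).
Proof.
case: sysU => injU [cardU _].
rewrite -[in X in _ <= X](card_ord N) -card_draws.
have -> : M = #|U @: [set: 'I_M]| by rewrite card_imset // cardsT card_ord.
apply: subset_leq_card; apply/subsetP => A /imsetP [i _ ->].
by rewrite inE cardU.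
Qed.

End SetSystem.

Lemma binomial_lt_exp2 n k : 0 < k -> 'C(n, k) < 2 ^ n.
Proof.
move=> k_gt0.
rewrite -{1}(card_ord n) -card_draws.
have -> : 2 ^ n = #|powerset [set: 'I_n]| by rewrite card_powerset cardsT card_ord.
apply: proper_card; apply/properP; split.
  by apply/subsetP => A _; rewrite powersetE subsetT.
exists set0; first by rewrite powersetE sub0set.
by rewrite inE cards0 eq_sym -lt0n k_gt0.
Qed.

Local Open Scope R_scope.

Lemma INR_expn m n : INR (m ^ n)%N = INR m ^ n.
Proof. by elim: n => // n IHn; rewrite expnS mult_INR IHn. Qed.

Lemma INR_binomial n k : (k <= n)%nat -> INR 'C(n, k) = C n k.
Proof.
move=> le_kn.
have fact_natE m : Factorial.fact m = m`!.
  by elim: m => [//|m IHm]; rewrite factS -IHm.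
rewrite /C !fact_natE.
have := bin_fact le_kn => /(f_equal INR); rewrite !mult_INR => <-.
have kfact_neq0 : INR k`! <> 0 by apply: not_0_INR; have := fact_gt0 k; lia.
have nkfact_neq0 : INR (n - k)`! <> 0 by apply: not_0_INR; have := fact_gt0 (n - k); lia.
change (n - k)%coq_nat with (n - k)%N; field; lra.
Qed.

Lemma sum_f_R0_ge_term (f : nat -> R) n k : (forall i, 0 <= f i) -> (k <= n)%nat ->
  f k <= sum_f_R0 f n.
Proof.
move=> f_ge0; elim: n => [|n IHn] le_kn /=.
  have -> : k = 0%nat by lia.
  lra.
have [->|le_kn'] : (k = n.+1 \/ k <= n)%nat by lia.
  by have := cond_pos_sum f n f_ge0; lra.
by have := IHn le_kn'; have := f_ge0 n.+1; lra.
Qed.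

(* One term of the binomial expansion of (q + (1 - q)) ^ n. *)
Lemma binomial_term_le1 n k q : 0 < q < 1 -> (k <= n)%nat ->
  C n k * q ^ k * (1 - q) ^ (n - k) <= 1.
Proof.
move=> q01 le_kn.
set F := fun i => C n i * q ^ i * (1 - q) ^ (n - i)%coq_nat.
have sumF1 : sum_f_R0 F n = 1.
  by rewrite -Binomial.binomial (_ : q + (1 - q) = 1) ?pow1 //; ring.
rewrite -[X in _ <= X]sumF1; change (F k <= sum_f_R0 F n).
apply: sum_f_R0_ge_term => // i.
apply: Rmult_le_pos; last by apply: pow_le; lra.
apply: Rmult_le_pos; last by apply: pow_le; lra.
rewrite /C; apply: Rmult_le_pos; first exact: pos_INR.
by apply/Rlt_le/Rinv_0_lt_compat/Rmult_lt_0_compat; apply/lt_0_INR/Factorial.lt_O_fact.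
Qed.

Lemma ln_le_0 x : 0 < x -> x <= 1 -> ln x <= 0.
Proof.
move=> x_gt0 x_le1; apply: Rnot_lt_le => ln_gt0.
have := exp_increasing _ _ ln_gt0; rewrite exp_ln // exp_0; lra.
Qed.

Lemma ln_binomial_le n k q : 0 < q < 1 -> (k <= n)%nat ->
  ln (C n k) <= - (INR k * ln q + INR (n - k) * ln (1 - q)).
Proof.
move=> q01 le_kn.
have qk_gt0 : 0 < q ^ k by apply: pow_lt; lra.
have qnk_gt0 : 0 < (1 - q) ^ (n - k) by apply: pow_lt; lra.
have C_gt0 : 0 < C n k.
  by rewrite -INR_binomial //; apply/lt_0_INR/ltP; rewrite bin_gt0.
have Cqk_gt0 : 0 < C n k * q ^ k by apply: Rmult_lt_0_compat.
have := ln_le_0 (Rmult_lt_0_compat _ _ Cqk_gt0 qnk_gt0) (binomial_term_le1 q01 le_kn).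
rewrite (ln_mult (C n k * q ^ k)) // (ln_mult (C n k)) // !ln_pow; lra.
Qed.

Definition entropy_ln (p : R) : R := - (p * ln p + (1 - p) * ln (1 - p)).

Lemma h2_mul_ln2 p : 0 < p < 1 -> h2 p * ln 2 = entropy_ln p.
Proof.
move=> p01; have := ln_lt_2.
rewrite /h2 /xlog2x /log2 /entropy_ln.
destruct (Req_EM_T p 0); first lra.
destruct (Req_EM_T (1 - p) 0); first lra.
by move=> /= ?; field; lra.
Qed.

Lemma h2_0 : h2 0 = 0.
Proof.
rewrite /h2 /xlog2x /log2 Rminus_0_r ln_1.
destruct (Req_EM_T 0 0); last lra.
destruct (Req_EM_T 1 0) => /=; lra.
Qed.

Lemma entropy_ln_half : entropy_ln (1 / 2) = ln 2.
Proof.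
rewrite /entropy_ln (_ : 1 - 1 / 2 = / 2); last by field.
rewrite (_ : 1 / 2 = / 2); last by field.
rewrite ln_Rinv; lra.
Qed.

Lemma ln_le_sub1 x : 0 < x -> ln x <= x - 1.
Proof.
move=> x_gt0; apply: Rnot_lt_le => lt_x1_ln.
have := exp_increasing _ _ lt_x1_ln; have := exp_ineq1_le (x - 1).
rewrite exp_ln //; lra.
Qed.

Lemma neg_xlnx_le_sqrt p : 0 < p -> - (p * ln p) <= 2 * sqrt p.
Proof.
move=> p_gt0; have := sqrt_sqrt p (Rlt_le _ _ p_gt0).
move: (sqrt p) (sqrt_lt_R0 p p_gt0) => s s_gt0 <-.
have := ln_le_sub1 (Rinv_0_lt_compat _ s_gt0).
rewrite ln_Rinv // ln_mult // => ln_ge.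
have : s * s * / s = s by field; lra.
nra.
Qed.

Lemma neg_1m_ln_1m_le p : 0 <= p < 1 -> - ((1 - p) * ln (1 - p)) <= p.
Proof.
move=> p01; have q_gt0 : 0 < 1 - p by lra.
have := ln_le_sub1 (Rinv_0_lt_compat _ q_gt0); rewrite ln_Rinv // => ln_ge.
have : (1 - p) * - ln (1 - p) <= (1 - p) * (/ (1 - p) - 1) by apply: Rmult_le_compat_l; lra.
rewrite (_ : (1 - p) * (/ (1 - p) - 1) = p); last by field; lra.
lra.
Qed.

Lemma entropy_ln_le_sqrt p : 0 < p < 1 -> entropy_ln p <= 3 * sqrt p.
Proof.
move=> p01.
have := neg_xlnx_le_sqrt (p := p) ltac:(lra); have := neg_1m_ln_1m_le (p := p) ltac:(lra).
have : p <= sqrt p.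
  rewrite -{1}(sqrt_sqrt p); last lra.
  have := sqrt_lt_R0 p (proj1 p01); have : sqrt p < 1 by rewrite -sqrt_1; apply: sqrt_lt_1; lra.
  nra.
rewrite /entropy_ln; lra.
Qed.

Lemma continuity_entropy_ln p : 0 < p < 1 -> continuity_pt entropy_ln p.
Proof.
have continuity_ln x : 0 < x -> continuity_pt ln x.
  by move=> x_gt0; apply: derivable_continuous_pt; exists (/ x); exact: derivable_pt_lim_ln.
by move=> p01; rewrite /entropy_ln; reg; apply: continuity_ln; lra.
Qed.

Lemma entropy_ln_onto t : 0 < t < ln 2 -> exists2 p, 0 < p < 1 / 2 & entropy_ln p = t.
Proof.
move=> t_bd; have ln2_le1 := ln_le_sub1 Rlt_0_2.
set a := (t / 4) ^ 2.
have a_bd : 0 < a < 1 / 2 by rewrite /a; split; nra.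
have ha : entropy_ln a - t < 0.
  have := entropy_ln_le_sqrt (p := a) ltac:(lra).
  by rewrite /a sqrt_pow2; lra.
have hb : 0 < entropy_ln (1 / 2) - t by rewrite entropy_ln_half; lra.
have [|p [p_bd tE]] := Ranalysis5.IVT_interv (fun p => entropy_ln p - t) a (1 / 2) _ ltac:(lra) ha hb.
  move=> x x_bd; apply: continuity_pt_minus; first by apply: continuity_entropy_ln; lra.
  exact: continuity_pt_const.
exists p; last lra.
split; first lra.
case: (Rle_lt_or_eq_dec _ _ (proj2 p_bd)) => // pE.
by move: tE; rewrite pE entropy_ln_half; lra.
Qed.

Lemma h2inv_spec y : 0 < y < 1 -> 0 < h2inv y < 1 / 2 /\ h2 (h2inv y) = y.
Proof.
move=> y01; have ln2_gt := ln_lt_2.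
have [p p_bd pE] := entropy_ln_onto (t := y * ln 2) ltac:(nra).
have [[q_ge0 q_le] h2q] : 0 <= h2inv y <= 1 / 2 /\ h2 (h2inv y) = y.
  apply: (epsilon_spec (inhabits 0) (fun p => 0 <= p <= 1 / 2 /\ h2 p = y)).
  exists p; split; first lra.
  by apply: (Rmult_eq_reg_r (ln 2)); [rewrite h2_mul_ln2 ?pE; lra | lra].
split=> //; split.
- by case: (Rle_lt_or_eq_dec _ _ q_ge0) => // q0; move: h2q; rewrite -q0 h2_0; lra.
- case: (Rle_lt_or_eq_dec _ _ q_le) => // qhalf.
  have := h2_mul_ln2 (p := 1 / 2) ltac:(lra).
  by rewrite entropy_ln_half -qhalf h2q; nra.
Qed.

Lemma h2inv_log2_rate_spec (m n : nat) : (1 < m)%N -> (m < 2 ^ n)%N ->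
  0 < h2inv (log2 (INR m) / INR n) < 1 / 2 /\
  INR n * entropy_ln (h2inv (log2 (INR m) / INR n)) = ln (INR m).
Proof.
move=> m_gt1 m_lt; have ln2_gt := ln_lt_2.
have m_gt1R : 1 < INR m by apply: (lt_INR 1); apply/ltP.
have lnm_gt0 : 0 < ln (INR m) by rewrite -ln_1; apply: ln_increasing; lra.
have n_gt0 : 0 < INR n.
  apply/lt_0_INR/ltP; case: n m_lt => //; rewrite expn0; lia.
have lnm_lt : ln (INR m) < INR n * ln 2.
  rewrite -ln_pow; last lra.
  apply: ln_increasing; first lra.
  by rewrite -[2]/(INR 2) -INR_expn; apply/lt_INR/ltP.
have y_bd : 0 < log2 (INR m) / INR n < 1.
  rewrite /log2; split; first by apply: Rdiv_lt_0_compat => //; apply: Rdiv_lt_0_compat; lra.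
  apply: (Rmult_lt_reg_r (INR n * ln 2)); first nra.
  rewrite Rmult_1_l (_ : _ * _ = ln (INR m)) //; field; lra.
have [p_bd h2p] := h2inv_spec y_bd.
split=> //; rewrite -h2_mul_ln2 ?h2p; [rewrite /log2; field; lra | lra].
Qed.

Lemma entropy_le_density n k p : 0 < p < 1 / 2 ->
  n * entropy_ln p <= - (k * ln p + (n - k) * ln (1 - p)) -> p * n <= k.
Proof.
move=> p_bd; rewrite /entropy_ln.
have : ln p < ln (1 - p) by apply: ln_increasing; lra.
(* Rearranged, the hypothesis reads (k - p n) (ln (1 - p) - ln p) >= 0. *)
nra.
Qed.

Lemma binomial_bound_density (m n k : nat) p : (0 < m)%N -> (m <= 'C(n, k))%N ->
  (k <= n)%N -> 0 < p < 1 / 2 -> INR n * entropy_ln p = ln (INR m) ->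
  p * INR n <= INR k.
Proof.
move=> m_gt0 m_le le_kn p_bd nE.
apply: entropy_le_density => //; rewrite nE -minus_INR; last exact/leP.
apply: Rle_trans (ln_binomial_le (q := p) ltac:(lra) le_kn).
have m_gt0R : 0 < INR m by apply/lt_0_INR/ltP.
case: (Rle_lt_or_eq_dec (INR m) (C n k)); last by move=> ->; lra.
  by rewrite -INR_binomial //; apply/le_INR/leP.
by move=> lt_mC; apply/Rlt_le/ln_increasing.
Qed.

Lemma INR_set_system_johnson (N M Gamma Delta : nat) (U : 'I_M -> {set 'I_N}) :
  set_system Gamma Delta U -> (0 < M)%N ->
  INR M * INR Gamma ^ 2 <= INR N * (INR Gamma + (INR M - 1) * INR Delta).
Proof.
move=> sysU M_gt0; rewrite -[INR M - 1]/(INR M - INR 1) -minus_INR; last exact/leP.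
rewrite -INR_expn -!mult_INR -plus_INR -mult_INR; apply/le_INR/leP.
exact: set_system_johnson sysU.
Qed.

Lemma johnson_overlap alpha n m G D : 0 < alpha -> 0 < n -> 1 + n / alpha < m ->
  1 <= G -> m * G ^ 2 <= n * (G + (m - 1) * D) -> (1 - alpha) * G ^ 2 <= n * D.
Proof.
move=> alpha_gt0 n_gt0 m_big G_ge1 johnson.
have n_lt : n < alpha * (m - 1).
  apply: (Rmult_lt_reg_l (/ alpha)); first exact: Rinv_0_lt_compat.
  by rewrite -Rmult_assoc Rinv_l ?Rmult_1_l; lra.
have nG_le : n * G <= G ^ 2 + alpha * (m - 1) * G ^ 2.
  have : alpha * (m - 1) * G <= alpha * (m - 1) * G ^ 2 by apply: Rmult_le_compat_l; nra.
  nra.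
have : (m - 1) * ((1 - alpha) * G ^ 2 - n * D) <= 0 by nra.
have : 0 < m - 1 by have := Rdiv_lt_0_compat n alpha n_gt0 alpha_gt0; lra.
nra.
Qed.

Lemma ratio_ge_of_density alpha n p G D : alpha < 1 -> 0 < n -> 0 < G -> 0 <= p ->
  p * n <= G -> (1 - alpha) * G ^ 2 <= n * D -> D / G >= (1 - alpha) * p.
Proof.
move=> alpha_lt1 n_gt0 G_gt0 p_ge0 pn_le overlap.
apply/Rle_ge/(Rmult_le_reg_r G) => //.
rewrite (_ : D / G * G = D); last by field; lra.
apply: (Rmult_le_reg_r n) => //.
have : (1 - alpha) * G * (p * n) <= (1 - alpha) * G * G by apply: Rmult_le_compat_l; nra.
nra.
Qed.

Theorem proposition2 (alpha : R) (N M Gamma Delta : nat) (U : 'I_M -> {set 'I_N}) :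
  0 < alpha -> alpha < 1 ->
  (1 <= N)%nat ->
  INR M > 1 + INR N / alpha ->
  (Delta < Gamma)%nat -> (Gamma < N)%nat ->
  set_system Gamma Delta U ->
  INR Delta / INR Gamma >= (1 - alpha) * h2inv (log2 (INR M) / INR N).
Proof.
move=> alpha_gt0 alpha_lt1 N_ge1 M_big lt_DG lt_GN sysU.
have Gamma_gt0 : (0 < Gamma)%N by lia.
have N_gt0 : 0 < INR N by apply/lt_0_INR/ltP.
have Gamma_ge1 : 1 <= INR Gamma by apply/(le_INR 1)/leP.
have M_gt1 : (1 < M)%N.
  apply/ltP/(INR_lt 1); have := Rdiv_lt_0_compat _ _ N_gt0 alpha_gt0; rewrite /=; lra.
have M_le_C := set_system_card_le_binomial sysU.
have [p_bd Np] := h2inv_log2_rate_spec M_gt1 (leq_ltn_trans M_le_C (binomial_lt_exp2 N Gamma_gt0)).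
have pN_le := binomial_bound_density (ltnW M_gt1) M_le_C (ltnW lt_GN) p_bd Np.
have overlap := johnson_overlap alpha_gt0 N_gt0 M_big Gamma_ge1
  (INR_set_system_johnson sysU (ltnW M_gt1)).
apply: (ratio_ge_of_density alpha_lt1 N_gt0 _ _ pN_le overlap); lra.
Qed.
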